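(* Let $F$, $\mathcal K_\alpha$ be as in the context. For any $\alpha\in\{0,1\}^\infty$, $$\underline{\dim}_B(\mathcal K_\alpha)=\bar\lambda_\alpha\log_5 13+(1-\bar\lambda_\alpha)\log_5 44,\qquad \overline{\dim}_B(\mathcal K_\alpha)=\underline\lambda_\alpha\log_5 13+(1-\underline\lambda_\alpha)\log_5 44.$$ If $\alpha$ is preperiodic, then $\dim_H(\mathcal K_\alpha)=\dim_B(\mathcal K_\alpha)=\lambda_\alpha\log_5 13+(1-\lambda_\alpha)\log_5 44$.
   Context: Let $I=[0,1]^3$. Let $\mathcal D_0=\{(i,2,2),(2,i,2),(2,2,i): i=0,1,2,3,4\}$ (13 elements) and $\mathcal D_1=\{d\in\{0,\ldots,4\}^3:\ \text{at least two coordinates of } d \text{ lie in }\{0,4\}\}$ (44 elements). For $i=0,1$ let $T_i(A)=\bigcup_{d\in\mathcal D_i}\frac{d+A}{5}$ for $A\subset\mathbb R^3$, and $T_{\alpha_1\cdots\alpha_k}=T_{\alpha_1}\circ\cdots\circ T_{\alpha_k}$. For $\alpha=\alpha_1\alpha_2\ldots\in\{0,1\}^\infty$ let $\mathcal K_\alpha=\bigcap_{k\ge1}T_{\alpha_1\cdots\alpha_k}(I)$ (these are the connected components of the fractal cube $F=\frac{F+\mathcal D_0\cup\mathcal D_1}{5}$). For $m\in\mathbb N$ let $\lambda_m$ be the proportion of zeros among $\alpha_1,\ldots,\alpha_m$; set $\bar\lambda_\alpha=\limsup_{m\to\infty}\lambda_m$, $\underline\lambda_\alpha=\liminf_{m\to\infty}\lambda_m$,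 and $\lambda_\alpha=\lim_m\lambda_m$ when it exists (for preperiodic $\alpha$ it exists and equals the proportion of zeros in a period). $\underline{\dim}_B,\overline{\dim}_B,\dim_B,\dim_H$ denote lower/upper box, box and Hausdorff dimension. *)

From Stdlib Require Import Reals Lra.
From Coquelicot Require Import Coquelicot.
Open Scope R_scope.

Definition pt : Type := (R * R * R)%type.

Definition dist3 (p q : pt) : R :=
  match p, q with
  | (x1, y1, z1), (x2, y2, z2) =>
      sqrt ((x1 - x2) ^ 2 + (y1 - y2) ^ 2 + (z1 - z2) ^ 2)
  end.

Definition diam_le (U : pt -> Prop) (r : R) : Prop :=
  forall p q, U p -> U q -> dist3 p q <= r.

Definition cubeI (p : pt) : Prop :=
  match p with
  | (x, y, z) => 0 <= x <= 1 /\ 0 <= y <= 1 /\ 0 <= z <= 1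
  end.

(** Digit sets; digits alpha_k are booleans: false = 0, true = 1. *)
Definition D0 (a b c : nat) : Prop :=
  (a <= 4 /\ b = 2 /\ c = 2)%nat \/ (a = 2 /\ b <= 4 /\ c = 2)%nat
  \/ (a = 2 /\ b = 2 /\ c <= 4)%nat.

Definition in04 (a : nat) : Prop := a = 0%nat \/ a = 4%nat.

Definition D1 (a b c : nat) : Prop :=
  (a <= 4 /\ b <= 4 /\ c <= 4)%nat /\
  ((in04 a /\ in04 b) \/ (in04 a /\ in04 c) \/ (in04 b /\ in04 c)).

Definition Dset (b : bool) : nat -> nat -> nat -> Prop :=
  if b then D1 else D0.

(** T_b(A) = union over d in D_b of (d + A)/5 ; p in (d+A)/5 iff 5p - d in A. *)
Definition Tmap (b : bool) (A : pt -> Prop) (p : pt) : Prop :=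
  match p with
  | (x, y, z) => exists a b' c : nat, Dset b a b' c /\
      A (5 * x - INR a, 5 * y - INR b', 5 * z - INR c)
  end.

Fixpoint iterT (alpha : nat -> bool) (m k : nat) (A : pt -> Prop) : pt -> Prop :=
  match k with
  | O => A
  | S k' => Tmap (alpha m) (iterT alpha (S m) k' A)
  end.

(** K_alpha = intersection over k >= 1 of T_{alpha_1 ... alpha_k}(I),
    where alpha_{j+1} is [alpha j]. *)
Definition Kalpha (alpha : nat -> bool) (p : pt) : Prop :=
  forall k : nat, (1 <= k)%nat -> iterT alpha 0 k cubeI p.

Fixpoint nzeros (alpha : nat -> bool) (m : nat) : nat :=
  match m with
  | O => O
  | S m' => (nzeros alpha m' + (if alpha m' then 0 else 1))%nat
  end.

Definition lambda_m (alpha : nat -> bool) (m : nat) : R :=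
  INR (nzeros alpha m) / INR m.

Definition lambda_sup (alpha : nat -> bool) : Rbar := LimSup_seq (lambda_m alpha).
Definition lambda_inf (alpha : nat -> bool) : Rbar := LimInf_seq (lambda_m alpha).
Definition lambda_lim (alpha : nat -> bool) : Rbar := Lim_seq (lambda_m alpha).

Definition preperiodic (alpha : nat -> bool) : Prop :=
  exists n0 per : nat, (0 < per)%nat /\
    forall n, (n0 <= n)%nat -> alpha (n + per)%nat = alpha n.

Definition covnum (delta : R) (E : pt -> Prop) : Rbar :=
  Glb_Rbar (fun x => exists n : nat, x = INR n /\
     exists U : nat -> pt -> Prop,
       (forall i, (i < n)%nat -> diam_le (U i) delta) /\
       (forall p, E p -> exists i, (i < n)%nat /\ U i p)).

Definition box_ratio (E : pt -> Prop) (delta : R) : Rbar :=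
  match covnum delta E with
  | Finite n => Finite (ln n / - ln delta)
  | p_infty => p_infty
  | m_infty => m_infty
  end.

(** liminf / limsup as delta -> 0+ *)
Definition lower_box_dim (E : pt -> Prop) : Rbar :=
  Rbar_lub (fun v => exists eps, 0 < eps /\
     v = Rbar_glb (fun w => exists delta, 0 < delta < eps /\ w = box_ratio E delta)).

Definition upper_box_dim (E : pt -> Prop) : Rbar :=
  Rbar_glb (fun v => exists eps, 0 < eps /\
     v = Rbar_lub (fun w => exists delta, 0 < delta < eps /\ w = box_ratio E delta)).

(** H^s_delta(E): inf of sum r_i^s over countable covers by sets U_i with
    diam U_i <= r_i, 0 < r_i <= delta (infimum of the empty set = +oo). *)
Definition hausdorff_delta (s delta : R) (E : pt -> Prop) : Rbar :=
  Glb_Rbar (fun v => exists (U : nat -> pt -> Prop) (r : nat -> R),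
     (forall i, 0 < r i <= delta) /\
     (forall i, diam_le (U i) (r i)) /\
     (forall p, E p -> exists i, U i p) /\
     is_series (fun i => Rpower (r i) s) v).

Definition hausdorff_measure (s : R) (E : pt -> Prop) : Rbar :=
  Rbar_lub (fun x => exists delta, 0 < delta /\ x = hausdorff_delta s delta E).

Definition hausdorff_dim (E : pt -> Prop) : Rbar :=
  Glb_Rbar (fun s => 0 <= s /\ hausdorff_measure s E = Finite 0).

Definition log5 (x : R) : R := ln x / ln 5.

(* K_alpha is a homogeneous Moran set: its level-k cubes, of side 5^-k, number
   N_k = 13^z_k 44^(k - z_k) where z_k counts the zeros among the first k digits, so that
   log N_k / (k log 5) = lambda_k log_5 13 + (1 - lambda_k) log_5 44. Every level-k cube
   meets K_alpha (each word extends to an infinite admissible path whose coding point lies in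
   all its cubes), and a set of diameter at most 5^-k meets at most 125 level-k cubes, so the
   covering number at scales between 5^-(k+1) and 5^-k is N_k up to bounded factors; taking
   liminf and limsup over k gives both box dimensions.
   For the Hausdorff dimension, covers by level-k cubes along the levels realising the liminf
   give the upper bound. For the lower bound, compactness of the space of paths (Koenig's
   lemma) makes any cover finite; counting the level-L words through it, with L deeper than all
   its sets, gives sum r_i^s >= c > 0 whenever s is below the liminf. So dim_H equals the lower
   box dimension for every alpha, and for preperiodic alpha lambda_m converges. *)

From Stdlib Require Import Reals Lra Lia Psatz List Classical ClassicalEpsilon.
From Coquelicot Require Import Coquelicot.
Import ListNotations.
Open Scope R_scope.

(** * Digits and words *)

Inductive axis : Type := ax1 | ax2 | ax3.

Notation digit := (nat * nat * nat)%type.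

Definition dcoord (a : axis) (d : digit) : nat :=
  match a, d with
  | ax1, (x, _, _) => x
  | ax2, (_, y, _) => y
  | ax3, (_, _, z) => z
  end.

Definition pcoord (a : axis) (P : pt) : R :=
  match a, P with
  | ax1, (x, _, _) => x
  | ax2, (_, y, _) => y
  | ax3, (_, _, z) => z
  end.

Definition block (x y z w : nat) : list digit :=
  list_prod (list_prod (seq x w) (seq y w)) (seq z w).

Lemma In_block x y z w d :
  In d (block x y z w) <->
  (x <= dcoord ax1 d < x + w /\ y <= dcoord ax2 d < y + w /\ z <= dcoord ax3 d < z + w)%nat.
Proof.
  destruct d as [[dx dy] dz]. unfold block. rewrite !in_prod_iff, !in_seq. simpl. tauto.
Qed.

Lemma length_block x y z w : length (block x y z w) = (w * w * w)%nat.
Proof. unfold block. rewrite !length_prod, !length_seq. reflexivity. Qed.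

Definition in04b (x : nat) : bool := Nat.eqb x 0 || Nat.eqb x 4.

Definition digitb (b : bool) (d : digit) : bool :=
  let '(x, y, z) := d in
  if b then (in04b x && in04b y) || (in04b x && in04b z) || (in04b y && in04b z)
  else (Nat.eqb y 2 && Nat.eqb z 2) || (Nat.eqb x 2 && Nat.eqb z 2) || (Nat.eqb x 2 && Nat.eqb y 2).

Definition digits (b : bool) : list digit := filter (digitb b) (block 0 0 0 5).

Lemma in04b_iff x : in04b x = true <-> in04 x.
Proof. unfold in04b, in04. rewrite Bool.orb_true_iff, !Nat.eqb_eq. tauto. Qed.

Lemma In_digits b x y z : In (x, y, z) (digits b) <-> Dset b x y z.
Proof.
  unfold digits. rewrite filter_In, In_block. simpl. destruct b.
  - unfold Dset, D1. rewrite !Bool.orb_true_iff, !Bool.andb_true_iff, !in04b_iff.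
    unfold in04. intuition lia.
  - unfold Dset, D0. rewrite !Bool.orb_true_iff, !Bool.andb_true_iff, !Nat.eqb_eq. intuition lia.
Qed.

Lemma dcoord_digits_lt b d a : In d (digits b) -> (dcoord a d < 5)%nat.
Proof.
  unfold digits. rewrite filter_In, In_block. destruct a; lia.
Qed.

Lemma length_digits b : length (digits b) = if b then 44%nat else 13%nat.
Proof. destruct b; reflexivity. Qed.

Lemma length_digits_bounds b : (13 <= length (digits b) <= 44)%nat.
Proof. rewrite length_digits. destruct b; lia. Qed.

(* A digit is determined by its base-5 encoding, and the encodings of [block 0 0 0 5] are
   [0, ..., 124]. *)
Lemma NoDup_digits b : NoDup (digits b).
Proof.
  apply NoDup_filter.
  apply (NoDup_map_inv (fun d => (dcoord ax1 d * 25 + dcoord ax2 d * 5 + dcoord ax3 d)%nat)).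
  replace (map _ _) with (seq 0 125) by reflexivity. apply seq_NoDup.
Qed.

Definition default_digit (b : bool) : digit := if b then (0, 0, 0)%nat else (2, 2, 2)%nat.

Lemma default_digit_In b : In (default_digit b) (digits b).
Proof. destruct b; vm_compute; tauto. Qed.

Fixpoint admissible (al : nat -> bool) (m : nat) (s : list digit) : Prop :=
  match s with
  | [] => True
  | d :: s' => In d (digits (al m)) /\ admissible al (S m) s'
  end.

Fixpoint words (al : nat -> bool) (m k : nat) : list (list digit) :=
  match k with
  | O => [[]]
  | S k' => flat_map (fun d => map (cons d) (words al (S m) k')) (digits (al m))
  end.

Fixpoint nwords (al : nat -> bool) (m k : nat) : nat :=
  match k with
  | O => 1%nat
  | S k' => (length (digits (al m)) * nwords al (S m) k')%nat
  end.

(* [code a s] is the [a]-th coordinate of the corner of the cube of [s], in units of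
   [5 ^ - length s]. *)
Fixpoint code (a : axis) (s : list digit) : nat :=
  match s with
  | [] => 0%nat
  | d :: s' => (dcoord a d * 5 ^ length s' + code a s')%nat
  end.

Lemma In_words al k : forall m s, In s (words al m k) <-> admissible al m s /\ length s = k.
Proof.
  induction k as [|k IH]; intros m s; simpl.
  - split.
    + intros [<-|[]]. simpl; tauto.
    + intros [_ H]. destruct s; [tauto|discriminate].
  - rewrite in_flat_map. split.
    + intros [d [Hd H]]. rewrite in_map_iff in H. destruct H as [t [<- Ht]].
      apply IH in Ht. simpl. split; [tauto|f_equal; tauto].
    + intros [Hv Hl]. destruct s as [|d t]; [discriminate|]. simpl in Hv, Hl.
      exists d. split; [tauto|]. apply in_map, IH. split; [tauto|lia].
Qed.

Lemma length_words al k : forall m, length (words al m k) = nwords al m k.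
Proof.
  induction k as [|k IH]; intros m; simpl; [reflexivity|].
  rewrite (flat_map_constant_length (c := nwords al (S m) k)); [reflexivity|].
  intros d _. rewrite length_map. apply IH.
Qed.

Lemma NoDup_flat_map_disjoint {A B} (f : A -> list B) (l : list A) :
  NoDup l -> (forall x, In x l -> NoDup (f x)) ->
  (forall x y z, In x l -> In y l -> In z (f x) -> In z (f y) -> x = y) ->
  NoDup (flat_map f l).
Proof.
  induction l as [|x l IH]; simpl; intros Hl Hf Hd; [constructor|].
  inversion Hl; subst. apply NoDup_app.
  - apply Hf; tauto.
  - apply IH; auto. intros; eapply Hd; eauto.
  - intros z Hz1 Hz2. rewrite in_flat_map in Hz2. destruct Hz2 as [y [Hy Hz2]].
    assert (x = y) by (eapply Hd; eauto). subst. contradiction.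
Qed.

Lemma NoDup_words al k : forall m, NoDup (words al m k).
Proof.
  induction k as [|k IH]; intros m; simpl.
  - repeat constructor; simpl; tauto.
  - apply NoDup_flat_map_disjoint.
    + apply NoDup_digits.
    + intros d _. apply NoDup_map_NoDup_ForallPairs; [|apply IH].
      intros s t _ _ E. injection E. auto.
    + intros x y z _ _ H1 H2. rewrite in_map_iff in H1, H2.
      destruct H1 as [t1 [<- _]], H2 as [t2 [E _]]. injection E. auto.
Qed.

Lemma nwords_add al a : forall m b, nwords al m (a + b) = (nwords al m a * nwords al (m + a) b)%nat.
Proof.
  induction a as [|a IH]; intros m b; simpl.
  - rewrite !Nat.add_0_r. reflexivity.
  - rewrite IH, <- Nat.add_succ_comm. lia.
Qed.

Lemma nwords_pos al k : forall m, (1 <= nwords al m k)%nat.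
Proof.
  induction k as [|k IH]; intros m; simpl; [lia|].
  pose proof (length_digits_bounds (al m)). specialize (IH (S m)). nia.
Qed.

Lemma admissible_app al s : forall m t,
  admissible al m (s ++ t) <-> admissible al m s /\ admissible al (m + length s) t.
Proof.
  induction s as [|d s IH]; intros m t; simpl.
  - rewrite Nat.add_0_r. tauto.
  - rewrite IH, Nat.add_succ_r. tauto.
Qed.

Lemma admissible_nth al s : forall m d j, admissible al m s -> (j < length s)%nat ->
  In (nth j s d) (digits (al (m + j)%nat)).
Proof.
  induction s as [|x s IH]; simpl; intros m d j Hv Hj; [lia|].
  destruct j as [|j].
  - rewrite Nat.add_0_r. tauto.
  - rewrite Nat.add_succ_r, <- Nat.add_succ_l. apply IH; [tauto|lia].
Qed.

Lemma code_lt al a s : forall m, admissible al m s -> (code a s < 5 ^ length s)%nat.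
Proof.
  induction s as [|d s IH]; simpl; intros m Hv; [lia|].
  pose proof (dcoord_digits_lt _ d a (proj1 Hv)). specialize (IH (S m) (proj2 Hv)). nia.
Qed.

Lemma code_app a s t : code a (s ++ t) = (code a s * 5 ^ length t + code a t)%nat.
Proof.
  induction s as [|d s IH]; simpl; [reflexivity|].
  rewrite IH, length_app, Nat.pow_add_r. nia.
Qed.

Lemma mul_add_inj a b a' b' M : (b < M)%nat -> (b' < M)%nat ->
  (a * M + b = a' * M + b')%nat -> a = a' /\ b = b'.
Proof.
  intros. destruct (Nat.lt_trichotomy a a') as [H2|[H2|H2]].
  - assert (a * M + M <= a' * M)%nat by nia. lia.
  - subst. lia.
  - assert (a' * M + M <= a * M)%nat by nia. lia.
Qed.

Lemma code_inj al s : forall m s', admissible al m s -> admissible al m s' ->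
  length s = length s' -> (forall a, code a s = code a s') -> s = s'.
Proof.
  induction s as [|d s IH]; intros m s' Hv Hv' Hl Hc;
    destruct s' as [|d' s']; try discriminate; [reflexivity|].
  simpl in Hv, Hv', Hl. injection Hl as Hl.
  assert (Hsplit : forall a, dcoord a d = dcoord a d' /\ code a s = code a s').
  { intros a. specialize (Hc a). simpl in Hc. rewrite <- Hl in Hc.
    apply (mul_add_inj _ _ _ _ (5 ^ length s)); [| |exact Hc].
    - exact (code_lt al a s (S m) (proj2 Hv)).
    - rewrite Hl. exact (code_lt al a s' (S m) (proj2 Hv')). }
  f_equal.
  - destruct d as [[x y] z], d' as [[x' y'] z'].
    destruct (Hsplit ax1) as [E1 _], (Hsplit ax2) as [E2 _], (Hsplit ax3) as [E3 _].
    simpl in E1, E2, E3. subst. reflexivity.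
  - apply (IH (S m) s'); try tauto. intros a. apply Hsplit.
Qed.

(** * Cubes and the coding map *)

Definition zoom (s : list digit) (P : pt) : pt :=
  let '(x, y, z) := P in
  (5 ^ length s * x - INR (code ax1 s), 5 ^ length s * y - INR (code ax2 s),
   5 ^ length s * z - INR (code ax3 s)).

Definition cube (s : list digit) (P : pt) : Prop := cubeI (zoom s P).

Lemma INR_5 : INR 5 = 5.
Proof. simpl. lra. Qed.

Lemma zoom_cons d s x y z :
  zoom (d :: s) (x, y, z) =
  zoom s (5 * x - INR (dcoord ax1 d), 5 * y - INR (dcoord ax2 d), 5 * z - INR (dcoord ax3 d)).
Proof.
  unfold zoom. cbn [code length]. rewrite !plus_INR, !mult_INR, !pow_INR, INR_5.
  f_equal; [f_equal|]; simpl; ring.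
Qed.

Lemma zoom_nil P : zoom [] P = P.
Proof. destruct P as [[x y] z]. unfold zoom. simpl. f_equal; [f_equal|]; ring. Qed.

Lemma iterT_iff al k : forall m A P, iterT al m k A P <->
  exists s, admissible al m s /\ length s = k /\ A (zoom s P).
Proof.
  induction k as [|k IH]; intros m A P; simpl.
  - split.
    + intros H. exists []. rewrite zoom_nil. simpl. tauto.
    + intros [[|d s] [_ [Hl H]]]; [|discriminate]. rewrite zoom_nil in H. exact H.
  - destruct P as [[x y] z]. cbn [Tmap]. split.
    + intros [a [b [c [Hd H]]]]. apply IH in H. destruct H as [s [Hv [Hl H]]].
      exists ((a, b, c) :: s). rewrite zoom_cons. simpl. rewrite In_digits. auto.
    + intros [[|[[a b] c] s] [Hv [Hl H]]]; [discriminate|].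
      simpl in Hv, Hl. rewrite zoom_cons in H. rewrite In_digits in Hv.
      exists a, b, c. split; [tauto|]. apply IH. exists s. split; [tauto|]. split; [lia|exact H].
Qed.

Lemma Kalpha_iff al P : Kalpha al P <->
  forall k, (1 <= k)%nat -> exists s, In s (words al 0 k) /\ cube s P.
Proof.
  unfold Kalpha. split.
  - intros H k Hk. apply H, iterT_iff in Hk. destruct Hk as [s [Hv [Hl Hc]]].
    exists s. rewrite In_words. auto.
  - intros H k Hk. apply iterT_iff. destruct (H k Hk) as [s [Hs Hc]].
    rewrite In_words in Hs. exists s. tauto.
Qed.

Lemma cube_iff s P : cube s P <->
  forall a, 0 <= 5 ^ length s * pcoord a P - INR (code a s) <= 1.
Proof.
  destruct P as [[x y] z]. unfold cube, zoom, cubeI. split.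
  - intros (H1 & H2 & H3) []; assumption.
  - intros H. repeat split; apply (H ax1) || apply (H ax2) || apply (H ax3).
Qed.

Lemma pow5_pos k : 0 < 5 ^ k.
Proof. apply pow_lt. lra. Qed.

Lemma INR_pow5 k : INR (5 ^ k) = 5 ^ k.
Proof. rewrite pow_INR, INR_5. reflexivity. Qed.

Definition path (al : nat -> bool) (e : nat -> digit) : Prop := forall j, In (e j) (digits (al j)).

Definition prefix (e : nat -> digit) (k : nat) : list digit := map e (seq 0 k).

Lemma length_prefix e k : length (prefix e k) = k.
Proof. unfold prefix. rewrite length_map, length_seq. reflexivity. Qed.

Lemma admissible_map_seq al e : path al e -> forall k m, admissible al m (map e (seq m k)).
Proof.
  intros He k. induction k as [|k IH]; intros m; simpl; [tauto|]. split; [apply He|apply IH].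
Qed.

Lemma prefix_In_words al e k : path al e -> In (prefix e k) (words al 0 k).
Proof.
  intros He. apply In_words. split; [apply admissible_map_seq, He|apply length_prefix].
Qed.

Definition approx (a : axis) (e : nat -> digit) (k : nat) : R :=
  INR (code a (prefix e k)) / 5 ^ k.

Lemma approx_mono al a e k n : path al e -> (k <= n)%nat ->
  approx a e k <= approx a e n <= approx a e k + / 5 ^ k.
Proof.
  intros He Hkn. unfold approx.
  replace (prefix e n) with (prefix e k ++ map e (seq k (n - k))).
  2:{ unfold prefix. rewrite <- map_app, <- seq_app. f_equal. f_equal. lia. }
  rewrite code_app, length_map, length_seq, plus_INR, mult_INR, INR_pow5.
  pose proof (code_lt al a _ k (admissible_map_seq al e He (n - k) k)) as Ht.
  rewrite length_map, length_seq in Ht. apply lt_INR in Ht. rewrite INR_pow5 in Ht.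
  replace (5 ^ n) with (5 ^ k * 5 ^ (n - k)) by (rewrite <- pow_add; f_equal; lia).
  pose proof (pow5_pos k). pose proof (pow5_pos (n - k)).
  pose proof (pos_INR (code a (map e (seq k (n - k))))).
  set (A := INR (code a (prefix e k))) in *. set (B := INR (code a (map e (seq k (n - k))))) in *.
  set (u := 5 ^ k) in *. set (v := 5 ^ (n - k)) in *.
  replace ((A * v + B) / (u * v)) with (A / u + (B / v) * / u) by (field; lra).
  assert (Hq : 0 <= B / v <= 1).
  { split; [apply Rdiv_le_0_compat; lra|].
    apply (Rmult_le_reg_r v); [lra|]. unfold Rdiv. rewrite Rmult_assoc, Rinv_l; lra. }
  assert (0 < / u) by (apply Rinv_0_lt_compat; lra).
  unfold Rdiv at 1 3. nra.
Qed.

(* The cap at [1] makes the set bounded for every [e]; along paths it is never active. *)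
Definition approx_capped (a : axis) (e : nat -> digit) (x : R) : Prop :=
  exists n, x = Rmin (approx a e n) 1.

Lemma approx_capped_bound a e : bound (approx_capped a e).
Proof. exists 1. intros x [n ->]. apply Rmin_r. Qed.

Lemma approx_capped_inhabited a e : exists x, approx_capped a e x.
Proof. exists (Rmin (approx a e 0) 1). exists 0%nat. reflexivity. Qed.

Definition coding (a : axis) (e : nat -> digit) : R :=
  proj1_sig (completeness _ (approx_capped_bound a e) (approx_capped_inhabited a e)).

Lemma coding_approx al a e k : path al e ->
  approx a e k <= coding a e <= approx a e k + / 5 ^ k.
Proof.
  intros He. unfold coding. destruct (completeness _ _ _) as [X [Hub Hlub]]. simpl.
  assert (Hle1 : forall n, approx a e n <= 1).
  { intros n. destruct (approx_mono al a e 0 n He ltac:(lia)) as [_ H].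
    unfold approx at 2 in H. simpl in H. lra. }
  pose proof (pow5_pos k) as H5. assert (0 < / 5 ^ k) by (apply Rinv_0_lt_compat; lra).
  split.
  - rewrite <- (Rmin_left _ _ (Hle1 k)). apply Hub. exists k. reflexivity.
  - apply Hlub. intros x [n ->]. eapply Rle_trans; [apply Rmin_l|].
    destruct (Nat.le_gt_cases k n) as [Hkn|Hkn].
    + apply (approx_mono al a e k n He Hkn).
    + destruct (approx_mono al a e n k He ltac:(lia)) as [H1 _]. lra.
Qed.

Definition point (e : nat -> digit) : pt := (coding ax1 e, coding ax2 e, coding ax3 e).

Lemma cube_prefix_point al e k : path al e -> cube (prefix e k) (point e).
Proof.
  intros He. apply cube_iff. intros a. rewrite length_prefix.
  replace (pcoord a (point e)) with (coding a e) by (destruct a; reflexivity).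
  pose proof (coding_approx al a e k He) as [H1 H2]. unfold approx in *.
  pose proof (pow5_pos k).
  apply (Rmult_le_compat_l (5 ^ k)) in H1, H2; try lra.
  replace (5 ^ k * (INR (code a (prefix e k)) / 5 ^ k)) with (INR (code a (prefix e k))) in H1
    by (field; lra).
  replace (5 ^ k * (INR (code a (prefix e k)) / 5 ^ k + / 5 ^ k))
    with (INR (code a (prefix e k)) + 1) in H2 by (field; lra).
  lra.
Qed.

Lemma Kalpha_point al e : path al e -> Kalpha al (point e).
Proof.
  intros He. apply Kalpha_iff. intros k _. exists (prefix e k).
  split; [apply prefix_In_words|apply (cube_prefix_point al)]; exact He.
Qed.

Definition extend (al : nat -> bool) (s : list digit) : nat -> digit :=
  fun j => nth j s (default_digit (al j)).

Lemma extend_path al s : admissible al 0 s -> path al (extend al s).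
Proof.
  intros Hv j. unfold extend. destruct (Nat.lt_ge_cases j (length s)) as [Hj|Hj].
  - apply (admissible_nth al s 0 _ j Hv Hj).
  - rewrite nth_overflow by lia. apply default_digit_In.
Qed.

Lemma map_nth_seq_firstn {A} (s : list A) : forall (f : nat -> A) k, (k <= length s)%nat ->
  map (fun j => nth j s (f j)) (seq 0 k) = firstn k s.
Proof.
  induction s as [|x s IH]; intros f [|k] Hk; simpl in *; try reflexivity; try lia.
  rewrite <- seq_shift, map_map. f_equal. apply IH. lia.
Qed.

Lemma prefix_extend al s k : (k <= length s)%nat -> prefix (extend al s) k = firstn k s.
Proof. apply map_nth_seq_firstn. Qed.

(** * Counting cubes *)

Lemma coord_le_dist3 a P Q : Rabs (pcoord a P - pcoord a Q) <= dist3 P Q.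
Proof.
  destruct P as [[x1 y1] z1], Q as [[x2 y2] z2]. unfold dist3.
  rewrite <- sqrt_Rsqr_abs. apply sqrt_le_1_alt. unfold Rsqr.
  pose proof (pow2_ge_0 (x1 - x2)). pose proof (pow2_ge_0 (y1 - y2)).
  pose proof (pow2_ge_0 (z1 - z2)). destruct a; simpl in *; lra.
Qed.

Lemma dist3_le_coords P Q c : (forall a, Rabs (pcoord a P - pcoord a Q) <= c) ->
  dist3 P Q <= 2 * c.
Proof.
  destruct P as [[x1 y1] z1], Q as [[x2 y2] z2]. intros H. unfold dist3.
  assert (Hc : 0 <= c) by (pose proof (Rabs_pos (x1 - x2)); specialize (H ax1); simpl in H; lra).
  rewrite <- (sqrt_Rsqr (2 * c)) by lra. apply sqrt_le_1_alt. unfold Rsqr.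
  assert (Hsq : forall t, Rabs t <= c -> t ^ 2 <= c * c).
  { intros t Ht. rewrite <- (pow2_abs t). pose proof (Rabs_pos t). simpl. nra. }
  pose proof (Hsq _ (H ax1)). pose proof (Hsq _ (H ax2)). pose proof (Hsq _ (H ax3)).
  simpl in *. nra.
Qed.

Lemma cube_coord_close s P Q a : cube s P -> cube s Q ->
  Rabs (pcoord a P - pcoord a Q) <= / 5 ^ length s.
Proof.
  rewrite !cube_iff. intros HP HQ. specialize (HP a). specialize (HQ a).
  pose proof (pow5_pos (length s)).
  apply (Rmult_le_reg_l (5 ^ length s)); [lra|]. rewrite Rinv_r by lra.
  rewrite <- (Rabs_pos_eq (5 ^ length s)) at 1 by lra. rewrite <- Rabs_mult.
  apply Rabs_le. lra.
Qed.

Lemma cube_diam s : diam_le (cube s) (2 / 5 ^ length s).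
Proof.
  intros P Q HP HQ. unfold Rdiv.
  apply dist3_le_coords. intros a. apply cube_coord_close; assumption.
Qed.

Lemma code_close s t P Q a : length s = length t -> cube s P -> cube t Q ->
  Rabs (pcoord a P - pcoord a Q) <= / 5 ^ length s ->
  (code a s <= code a t + 2 /\ code a t <= code a s + 2)%nat.
Proof.
  intros Hl HP HQ Hd. rewrite cube_iff in HP, HQ. specialize (HP a). specialize (HQ a).
  rewrite <- Hl in HQ. pose proof (pow5_pos (length s)).
  assert (Hd' : Rabs (5 ^ length s * pcoord a P - 5 ^ length s * pcoord a Q) <= 1).
  { rewrite <- Rmult_minus_distr_l, Rabs_mult, Rabs_pos_eq by lra.
    apply (Rmult_le_compat_l (5 ^ length s)) in Hd; [|lra]. rewrite Rinv_r in Hd by lra. exact Hd. }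
  apply Rabs_le_between in Hd'.
  assert (H1 : (code a s < code a t + 3)%nat)
    by (apply INR_lt; rewrite plus_INR; simpl (INR 3); lra).
  assert (H2 : (code a t < code a s + 3)%nat)
    by (apply INR_lt; rewrite plus_INR; simpl (INR 3); lra).
  lia.
Qed.

Definition codes (s : list digit) : digit := (code ax1 s, code ax2 s, code ax3 s).

Definition near (s0 s : list digit) : bool :=
  forallb (fun a => Nat.leb (code a s) (code a s0 + 2) && Nat.leb (code a s0) (code a s + 2))%bool
    [ax1; ax2; ax3].

Lemma near_iff s0 s : near s0 s = true <->
  forall a, (code a s <= code a s0 + 2 /\ code a s0 <= code a s + 2)%nat.
Proof.
  unfold near. rewrite forallb_forall. split.
  - intros H a. specialize (H a ltac:(destruct a; simpl; tauto)).
    rewrite Bool.andb_true_iff, !Nat.leb_le in H. exact H.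
  - intros H a _. rewrite Bool.andb_true_iff, !Nat.leb_le. apply H.
Qed.

(* Two cubes of the same level meeting a set of diameter [<= 5 ^ -k] have corners at most
   two grid steps apart on each axis, so there are at most [5 ^ 3] of them. *)
Lemma cubes_meeting_small_set al m k (U : pt -> Prop) : diam_le U (/ 5 ^ k) ->
  exists B, (length B <= 125)%nat /\
    forall s, In s (words al m k) -> (exists q, U q /\ cube s q) -> In s B.
Proof.
  intros HU.
  destruct (classic (exists s0, In s0 (words al m k) /\ exists q, U q /\ cube s0 q))
    as [[s0 [Hs0 [q0 [Uq0 Hq0]]]]|Hno].
  - exists (filter (near s0) (words al m k)). split.
    + rewrite <- (length_map codes).
      transitivity (length (block (code ax1 s0 - 2) (code ax2 s0 - 2) (code ax3 s0 - 2) 5));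
        [|rewrite length_block; reflexivity].
      apply NoDup_incl_length.
      * apply NoDup_map_NoDup_ForallPairs; [|apply NoDup_filter, NoDup_words].
        intros s t Hs Ht E. rewrite filter_In, In_words in Hs, Ht.
        unfold codes in E. injection E as E1 E2 E3.
        apply (code_inj al s m t); try tauto; [lia|]. intros []; assumption.
      * intros d Hd. apply in_map_iff in Hd. destruct Hd as [s [<- Hs]].
        rewrite filter_In, near_iff in Hs. destruct Hs as [_ Hn].
        apply In_block. simpl.
        destruct (Hn ax1), (Hn ax2), (Hn ax3). lia.
    + intros s Hs [q [Uq Hq]]. apply filter_In. split; [exact Hs|]. apply near_iff. intros a.
      rewrite In_words in Hs, Hs0. destruct Hs as [_ Hl], Hs0 as [_ Hl0].
      apply (code_close s s0 q q0 a); [lia|assumption|assumption|].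
      rewrite Hl. eapply Rle_trans; [apply coord_le_dist3|]. apply HU; assumption.
  - exists []. split; [simpl; lia|]. intros s Hs Hq. exfalso. apply Hno. exists s. tauto.
Qed.

Lemma finite_choice {A} (n : nat) (Q : nat -> A -> Prop) (a0 : A) :
  (forall i, (i < n)%nat -> exists x, Q i x) -> exists f, forall i, (i < n)%nat -> Q i (f i).
Proof.
  induction n as [|n IH]; intros H.
  - exists (fun _ => a0). intros; lia.
  - destruct IH as [f Hf]; [intros i Hi; apply H; lia|].
    destruct (H n ltac:(lia)) as [x Hx].
    exists (fun i => if Nat.eqb i n then x else f i). intros i Hi.
    destruct (Nat.eqb_spec i n); [subst; exact Hx|apply Hf; lia].
Qed.

Lemma list_sum_map_le {A} (f g : A -> nat) (l : list A) :
  (forall x, In x l -> (f x <= g x)%nat) -> (list_sum (map f l) <= list_sum (map g l))%nat.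
Proof.
  induction l as [|x l IH]; simpl; intros H; [lia|].
  specialize (IH (fun y Hy => H y (or_intror Hy))). specialize (H x (or_introl eq_refl)). lia.
Qed.

Lemma list_sum_map_const {A} (c : nat) (l : list A) :
  list_sum (map (fun _ => c) l) = (c * length l)%nat.
Proof. induction l as [|x l IH]; simpl; lia. Qed.

Lemma NoDup_covered_length {A} (X : list A) (n : nat) (c : nat -> nat) (P : nat -> A -> Prop) :
  NoDup X -> (forall x, In x X -> exists i, (i < n)%nat /\ P i x) ->
  (forall i, (i < n)%nat ->
     exists B, (length B <= c i)%nat /\ forall x, In x X -> P i x -> In x B) ->
  (length X <= list_sum (map c (seq 0 n)))%nat.
Proof.
  intros HX Hc HB.
  destruct (finite_choice n _ [] HB) as [Bf HBf].
  eapply Nat.le_trans; [apply (NoDup_incl_length HX (l' := flat_map Bf (seq 0 n)))|].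
  - intros x Hx. destruct (Hc x Hx) as [i [Hi HP]]. apply in_flat_map. exists i.
    split; [apply in_seq; lia|]. apply (proj2 (HBf i Hi)); auto.
  - rewrite length_flat_map. apply list_sum_map_le. intros i Hi.
    apply in_seq in Hi. apply HBf. lia.
Qed.

(** * Covering numbers and the dimension profile *)

Definition ncubes (al : nat -> bool) (k : nat) : R := INR (nwords al 0 k).

Lemma ncubes_ge_1 al k : 1 <= ncubes al k.
Proof. apply (le_INR 1), nwords_pos. Qed.

Lemma nwords_le_cover al k n (U : nat -> pt -> Prop) :
  (forall i, (i < n)%nat -> diam_le (U i) (/ 5 ^ k)) ->
  (forall p, Kalpha al p -> exists i, (i < n)%nat /\ U i p) ->
  (nwords al 0 k <= 125 * n)%nat.
Proof.
  intros HU Hc. rewrite <- length_words.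
  replace (125 * n)%nat with (list_sum (map (fun _ => 125%nat) (seq 0 n)))
    by (rewrite list_sum_map_const, length_seq; reflexivity).
  apply (NoDup_covered_length _ n _ (fun i s => exists q, U i q /\ cube s q)).
  - apply NoDup_words.
  - intros s Hs. pose proof Hs as [Hv Hl]%In_words.
    pose proof (extend_path al s Hv) as He.
    destruct (Hc _ (Kalpha_point al _ He)) as [i [Hi Ui]]. exists i. split; [exact Hi|].
    exists (point (extend al s)). split; [exact Ui|].
    pose proof (cube_prefix_point al _ k He) as H.
    rewrite prefix_extend, firstn_all2 in H by lia. exact H.
  - intros i Hi. apply (cubes_meeting_small_set al 0 k (U i) (HU i Hi)).
Qed.

Lemma nth_words_diam al k i : (i < nwords al 0 k)%nat ->
  diam_le (cube (nth i (words al 0 k) [])) (2 / 5 ^ k).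
Proof.
  intros Hi. rewrite <- length_words in Hi.
  pose proof (nth_In _ [] Hi) as [_ Hl]%In_words.
  pose proof (cube_diam (nth i (words al 0 k) [])) as Hd. rewrite Hl in Hd. exact Hd.
Qed.

Lemma Kalpha_covered_by_words al k : (1 <= k)%nat -> forall p, Kalpha al p ->
  exists i, (i < nwords al 0 k)%nat /\ cube (nth i (words al 0 k) []) p.
Proof.
  intros Hk p Hp. apply Kalpha_iff with (k := k) in Hp; [|exact Hk].
  destruct Hp as [s [Hs Hq]]. destruct (In_nth _ _ [] Hs) as [i [Hi Ei]].
  exists i. rewrite length_words in Hi. split; [exact Hi|]. rewrite Ei. exact Hq.
Qed.

Lemma covnum_bounds al k j delta : (1 <= j)%nat -> 0 < delta <= / 5 ^ k -> 2 / 5 ^ j <= delta ->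
  exists c, covnum delta (Kalpha al) = Finite c /\ ncubes al k / 125 <= c <= ncubes al j.
Proof.
  intros Hj Hd Hj2. unfold covnum.
  match goal with |- context [Glb_Rbar ?E] =>
    destruct (Glb_Rbar_correct E) as [Hlb Hglb]; set (g := Glb_Rbar E) in * end.
  assert (Hup : Rbar_le g (ncubes al j)).
  { apply Hlb. exists (nwords al 0 j). split; [reflexivity|].
    exists (fun i => cube (nth i (words al 0 j) [])). split.
    - intros i Hi P Q HP HQ.
      eapply Rle_trans; [apply (nth_words_diam al j i Hi P Q HP HQ)|exact Hj2].
    - apply Kalpha_covered_by_words, Hj. }
  assert (Hlow : Rbar_le (ncubes al k / 125) g).
  { apply Hglb. intros x [n [-> [U [HU Hc]]]].
    assert (Hn : (nwords al 0 k <= 125 * n)%nat).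
    { apply (nwords_le_cover al k n U); [|exact Hc].
      intros i Hi P Q HP HQ. eapply Rle_trans; [apply (HU i Hi P Q HP HQ)|]. lra. }
    apply le_INR in Hn. rewrite mult_INR in Hn. simpl. unfold ncubes.
    replace (INR 125) with 125 in Hn by (simpl; lra). lra. }
  destruct g as [c| |]; simpl in Hup, Hlow; try contradiction.
  exists c. split; [reflexivity|lra].
Qed.

Definition dim_profile (al : nat -> bool) (k : nat) : R :=
  lambda_m al k * log5 13 + (1 - lambda_m al k) * log5 44.

Lemma nzeros_le al k : (nzeros al k <= k)%nat.
Proof. induction k; simpl; [lia|]. destruct (al k); lia. Qed.

Lemma nwords_formula al k : nwords al 0 k = (13 ^ nzeros al k * 44 ^ (k - nzeros al k))%nat.
Proof.
  induction k as [|k IH]; [reflexivity|].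
  replace (nwords al 0 (S k)) with (nwords al 0 k * nwords al k 1)%nat
    by (pose proof (nwords_add al k 0 1) as H; rewrite Nat.add_1_r in H; exact (eq_sym H)).
  rewrite IH. simpl nwords. simpl nzeros.
  rewrite length_digits. pose proof (nzeros_le al k).
  destruct (al k).
  - rewrite Nat.add_0_r. replace (S k - nzeros al k)%nat with (S (k - nzeros al k)) by lia.
    rewrite Nat.pow_succ_r'. ring.
  - replace (S k - (nzeros al k + 1))%nat with (k - nzeros al k)%nat by lia.
    rewrite Nat.pow_add_r, Nat.pow_1_r. ring.
Qed.

Lemma ln5_pos : 0 < ln 5.
Proof. rewrite <- ln_1. apply ln_increasing; lra. Qed.

Lemma ln_ncubes al k : ln (ncubes al k) = dim_profile al k * (INR k * ln 5).
Proof.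
  unfold ncubes, dim_profile, lambda_m, log5. rewrite nwords_formula, mult_INR, !pow_INR.
  pose proof (nzeros_le al k). pose proof ln5_pos.
  replace (INR 13) with 13 by (simpl; lra). replace (INR 44) with 44 by (simpl; lra).
  rewrite ln_mult by (apply pow_lt; lra). rewrite !ln_pow by lra. rewrite minus_INR by lia.
  destruct k as [|k]; [simpl; ring|].
  assert (0 < INR (S k)) by (apply lt_0_INR; lia). field. lra.
Qed.

Lemma lambda_m_bounds al k : 0 <= lambda_m al k <= 1.
Proof.
  unfold lambda_m. pose proof (nzeros_le al k) as Hz. apply le_INR in Hz.
  pose proof (pos_INR (nzeros al k)). destruct k as [|k].
  - simpl. unfold Rdiv. rewrite Rinv_0. lra.
  - assert (0 < INR (S k)) by (apply lt_0_INR; lia). split.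
    + apply Rdiv_le_0_compat; lra.
    + apply (Rmult_le_reg_r (INR (S k))); [lra|]. unfold Rdiv. rewrite Rmult_assoc, Rinv_l; lra.
Qed.

Lemma log5_bounds : 1 < log5 13 < log5 44.
Proof.
  unfold log5. pose proof ln5_pos. split.
  - apply (Rmult_lt_reg_r (ln 5)); [lra|]. unfold Rdiv.
    rewrite Rmult_assoc, Rinv_l, Rmult_1_r, Rmult_1_l by lra. apply ln_increasing; lra.
  - apply Rmult_lt_compat_r; [apply Rinv_0_lt_compat; lra|]. apply ln_increasing; lra.
Qed.

Lemma dim_profile_bounds al k : log5 13 <= dim_profile al k <= log5 44.
Proof.
  unfold dim_profile. pose proof (lambda_m_bounds al k). pose proof log5_bounds. nra.
Qed.

Lemma nwords_le_pow al k : forall m, (nwords al m k <= 44 ^ k)%nat.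
Proof.
  induction k as [|k IH]; intros m; simpl; [lia|].
  pose proof (length_digits_bounds (al m)). specialize (IH (S m)). nia.
Qed.

Lemma ratio_close x D L a p P E : 0 < L <= D -> D <= L + a -> 0 <= p <= P ->
  Rabs (x - p * L) <= E -> Rabs (x / D - p) <= (E + P * a) / L.
Proof.
  intros [HL HLD] HDa Hp Hx.
  replace (x / D - p) with ((x - p * L - p * (D - L)) / D) by (field; lra).
  unfold Rdiv. rewrite Rabs_mult, Rabs_inv, (Rabs_pos_eq D) by lra.
  apply Rabs_le_between in Hx.
  assert (Hnum : Rabs (x - p * L - p * (D - L)) <= E + P * a).
  { apply Rabs_le. assert (0 <= p * (D - L) <= P * a) by (split; nra). split; nra. }
  apply Rmult_le_compat; [apply Rabs_pos|left; apply Rinv_0_lt_compat; lra|exact Hnum|].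
  apply Rinv_le_contravar; lra.
Qed.

Definition in_level (k : nat) (delta : R) : Prop := / 5 ^ S k < delta <= / 5 ^ k.

Lemma ln_in_level k delta : in_level k delta ->
  INR k * ln 5 <= - ln delta <= INR k * ln 5 + ln 5.
Proof.
  intros [H1 H2]. pose proof (pow5_pos k). pose proof (pow5_pos (S k)).
  assert (Hpos : 0 < / 5 ^ S k) by (apply Rinv_0_lt_compat; lra).
  pose proof (ln_increasing _ _ Hpos H1) as L1. pose proof (ln_le delta _ ltac:(lra) H2) as L2.
  rewrite ln_Rinv, ln_pow, S_INR in L1 by lra. rewrite ln_Rinv, ln_pow in L2 by lra. lra.
Qed.

(* [N_delta] lies between [N_k / 125] and [N_(k+2) <= 44 ^ 2 N_k], and [- ln delta] is within
   [ln 5] of [k ln 5]; the error term collects these. *)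
Lemma box_ratio_near_profile al k delta : (1 <= k)%nat -> in_level k delta ->
  exists beta, box_ratio (Kalpha al) delta = Finite beta /\
    Rabs (beta - dim_profile al k) <= (ln 125 + 3 * ln 44) / (INR k * ln 5).
Proof.
  intros Hk Hlev. pose proof Hlev as [Hd1 Hd2]. pose proof (pow5_pos (S k)) as H5.
  assert (Hdp : 0 < delta) by (eapply Rlt_trans; [apply Rinv_0_lt_compat|]; eauto).
  destruct (covnum_bounds al k (k + 2) delta ltac:(lia) (conj Hdp Hd2)) as [c [Hc [Hc1 Hc2]]].
  { eapply Rle_trans; [|left; exact Hd1].
    replace (5 ^ (k + 2)) with (5 * 5 ^ S k) by (rewrite Nat.add_succ_r, Nat.add_1_r; reflexivity).
    assert (0 < / 5 ^ S k) by (apply Rinv_0_lt_compat; lra).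
    unfold Rdiv. rewrite Rinv_mult. lra. }
  unfold box_ratio. rewrite Hc. eexists. split; [reflexivity|].
  pose proof (ncubes_ge_1 al k) as HN.
  assert (HN2 : ncubes al (k + 2) <= 44 ^ 2 * ncubes al k).
  { unfold ncubes. rewrite nwords_add, mult_INR, Rmult_comm.
    apply Rmult_le_compat_r; [apply pos_INR|].
    pose proof (nwords_le_pow al 2 (0 + k)) as Hw. apply le_INR in Hw. rewrite pow_INR in Hw.
    replace (INR 44) with 44 in Hw by (simpl; lra). exact Hw. }
  pose proof ln5_pos. pose proof (dim_profile_bounds al k). pose proof log5_bounds.
  assert (HkR : 0 < INR k) by (apply lt_0_INR; lia).
  assert (Hl44 : 0 < ln 44) by (rewrite <- ln_1; apply ln_increasing; lra).
  replace (ln 125 + 3 * ln 44) with (ln 125 + 2 * ln 44 + log5 44 * ln 5)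
    by (unfold log5; field; lra).
  pose proof (ln_in_level k delta Hlev) as HD.
  apply ratio_close; [split; [nra|lra]|lra|lra|].
  rewrite <- ln_ncubes. apply Rabs_le. split.
  - assert (Hlo : ln (ncubes al k / 125) <= ln c) by (apply ln_le; [apply Rdiv_lt_0_compat|]; lra).
    unfold Rdiv in Hlo. rewrite ln_mult, ln_Rinv in Hlo by (try apply Rinv_0_lt_compat; lra).
    lra.
  - assert (Hhi : ln c <= ln (44 ^ 2 * ncubes al k)) by (apply ln_le; lra).
    rewrite ln_mult, ln_pow in Hhi by (try apply pow_lt; lra).
    assert (0 <= ln 125) by (rewrite <- ln_1; apply ln_le; lra). simpl (INR 2) in Hhi. lra.
Qed.

(** * Box dimensions *)

Lemma nat_large x : exists K, forall k, (K <= k)%nat -> x < INR k.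
Proof.
  destruct (INR_unbounded x) as [K HK]. exists K. intros k Hk. apply le_INR in Hk. lra.
Qed.

Lemma pow5_ge k : INR k + 1 <= 5 ^ k.
Proof.
  induction k as [|k IH]; [simpl; lra|]. rewrite S_INR. simpl. pose proof (pos_INR k). lra.
Qed.

Lemma inv_pow5_lt eps : 0 < eps -> exists K, forall k, (K <= k)%nat -> / 5 ^ k < eps.
Proof.
  intros He. destruct (nat_large (/ eps)) as [K HK]. exists K. intros k Hk.
  specialize (HK k Hk). pose proof (pow5_ge k). pose proof (pow5_pos k).
  rewrite <- (Rinv_inv eps). apply Rinv_lt_contravar; [|lra].
  apply Rmult_lt_0_compat; [apply Rinv_0_lt_compat|]; lra.
Qed.

Lemma inv_pow5_le a b : (b <= a)%nat -> / 5 ^ a <= / 5 ^ b.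
Proof. intros H. apply Rinv_le_contravar; [apply pow5_pos|]. apply Rle_pow; [lra|exact H]. Qed.

Lemma in_level_exists delta : 0 < delta <= 1 -> exists k, in_level k delta.
Proof.
  intros Hd. destruct (inv_pow5_lt delta (proj1 Hd)) as [K HK].
  assert (Hgen : forall n, / 5 ^ n < delta -> exists k, in_level k delta).
  { induction n as [|n IH]; intros Hn.
    - simpl in Hn. rewrite Rinv_1 in Hn. lra.
    - destruct (Rle_or_lt delta (/ 5 ^ n)) as [H|H]; [exists n; split; assumption|apply IH, H]. }
  apply (Hgen K), HK. lia.
Qed.

Lemma in_level_large K k delta : in_level k delta -> delta < / 5 ^ K -> (K <= k)%nat.
Proof.
  intros [H1 _] H2. destruct (Nat.le_gt_cases K k) as [H|H]; [exact H|].
  pose proof (inv_pow5_le K (S k) H). lra.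
Qed.

Lemma in_level_pow k : in_level k (/ 5 ^ k).
Proof.
  split; [|lra]. apply Rinv_lt_contravar.
  - apply Rmult_lt_0_compat; apply pow5_pos.
  - simpl. pose proof (pow5_pos k). lra.
Qed.

Definition level_tracks (f : R -> Rbar) (g : nat -> R) : Prop :=
  forall e, 0 < e -> exists K, forall k delta, (K <= k)%nat -> in_level k delta ->
    exists beta, f delta = Finite beta /\ Rabs (beta - g k) < e.

Lemma Rbar_le_of_eps x V : (forall e, 0 < e -> Rbar_le x (Finite (V + e))) -> Rbar_le x (Finite V).
Proof.
  intros H. destruct x as [x| |]; simpl in *; [|apply (H 1); lra|exact I].
  destruct (Rle_or_lt x V) as [h|h]; [exact h|]. specialize (H ((x - V) / 2)). simpl in H. lra.
Qed.

Lemma Rbar_ge_of_eps x V : (forall e, 0 < e -> Rbar_le (Finite (V - e)) x) -> Rbar_le (Finite V) x.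
Proof.
  intros H. destruct x as [x| |]; simpl in *; [|exact I|apply (H 1); lra].
  destruct (Rle_or_lt V x) as [h|h]; [exact h|]. specialize (H ((V - x) / 2)). simpl in H. lra.
Qed.

Lemma Rbar_glb_spec (E : Rbar -> Prop) : Rbar_is_glb E (Rbar_glb E).
Proof. unfold Rbar_glb. destruct (Rbar_ex_glb E) as [g Hg]. exact Hg. Qed.

Lemma Rbar_lub_spec (E : Rbar -> Prop) : Rbar_is_lub E (Rbar_lub E).
Proof. unfold Rbar_lub. destruct (Rbar_ex_lub E) as [g Hg]. exact Hg. Qed.

Lemma lub_glb_of_level_tracks f g l : level_tracks f g -> is_LimInf_seq g (Finite l) ->
  Rbar_lub (fun v => exists eps, 0 < eps /\
    v = Rbar_glb (fun w => exists delta, 0 < delta < eps /\ w = f delta)) = Finite l.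
Proof.
  intros Htr Hg.
  set (G := fun eps => Rbar_glb (fun w => exists delta, 0 < delta < eps /\ w = f delta)).
  assert (Hup : forall eps, 0 < eps -> Rbar_le (G eps) (Finite l)).
  { intros eps Heps. apply Rbar_le_of_eps. intros e He.
    destruct (Htr (e / 2) ltac:(lra)) as [K1 HK1].
    destruct (inv_pow5_lt eps Heps) as [K2 HK2].
    destruct (proj1 (Hg (mkposreal (e / 2) ltac:(lra))) (K1 + K2)%nat) as [k [Hk Hgk]].
    destruct (HK1 k (/ 5 ^ k) ltac:(lia) (in_level_pow k)) as [beta [Hb Hbeta]].
    apply Rbar_le_trans with (Finite beta).
    - apply Rbar_glb_spec. exists (/ 5 ^ k). split; [|symmetry; exact Hb].
      split; [apply Rinv_0_lt_compat, pow5_pos|apply HK2; lia].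
    - simpl in *. apply Rabs_lt_between in Hbeta. lra. }
  assert (Hlow : forall e, 0 < e -> exists eps, 0 < eps /\ Rbar_le (Finite (l - e)) (G eps)).
  { intros e He. destruct (proj2 (Hg (mkposreal (e / 2) ltac:(lra)))) as [K0 HK0].
    destruct (Htr (e / 2) ltac:(lra)) as [K1 HK1].
    exists (/ 5 ^ (K0 + K1)). split; [apply Rinv_0_lt_compat, pow5_pos|].
    apply Rbar_glb_spec. intros w [delta [[Hd1 Hd2] ->]].
    pose proof (inv_pow5_le (K0 + K1) 0 ltac:(lia)) as H1. simpl in H1. rewrite Rinv_1 in H1.
    destruct (in_level_exists delta ltac:(lra)) as [k Hk].
    pose proof (in_level_large _ _ _ Hk Hd2) as HkK.
    destruct (HK1 k delta ltac:(lia) Hk) as [beta [-> Hbeta]].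
    specialize (HK0 k ltac:(lia)). simpl in *. apply Rabs_lt_between in Hbeta. lra. }
  apply Rbar_is_lub_unique. split.
  - intros x [eps [Heps ->]]. apply Hup, Heps.
  - intros b Hub. apply Rbar_ge_of_eps. intros e He. destruct (Hlow e He) as [eps [Heps Hle]].
    apply Rbar_le_trans with (G eps); [exact Hle|]. apply Hub. exists eps. auto.
Qed.

Lemma glb_lub_of_level_tracks f g l : level_tracks f g -> is_LimSup_seq g (Finite l) ->
  Rbar_glb (fun v => exists eps, 0 < eps /\
    v = Rbar_lub (fun w => exists delta, 0 < delta < eps /\ w = f delta)) = Finite l.
Proof.
  intros Htr Hg.
  assert (Htr' : level_tracks (fun delta => Rbar_opp (f delta)) (fun k => - g k)).
  { intros e He. destruct (Htr e He) as [K HK]. exists K. intros k delta Hk Hd.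
    destruct (HK k delta Hk Hd) as [beta [-> Hb]]. exists (- beta). split; [reflexivity|].
    replace (- beta - - g k) with (- (beta - g k)) by ring. rewrite Rabs_Ropp. exact Hb. }
  pose proof (lub_glb_of_level_tracks _ _ _ Htr' (proj2 (is_LimInf_opp_LimSup_seq g l) Hg)) as H.
  assert (Hflip : forall eps, Rbar_lub (fun w => exists delta, 0 < delta < eps /\ w = f delta) =
    Rbar_opp (Rbar_glb (fun w => exists delta, 0 < delta < eps /\ w = Rbar_opp (f delta)))).
  { intros eps. set (W := fun w => exists delta, 0 < delta < eps /\ w = f delta).
    transitivity (Rbar_opp (Rbar_glb (fun x => W (Rbar_opp x)))).
    - rewrite Rbar_opp_glb_lub, Rbar_opp_involutive. reflexivity.
    - f_equal. apply Rbar_glb_rw. intros x. unfold W.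
      split; intros [delta [Hd E]]; exists delta; split; try exact Hd.
      + rewrite <- E, Rbar_opp_involutive. reflexivity.
      + rewrite E, Rbar_opp_involutive. reflexivity. }
  replace (Finite l) with (Rbar_opp (Finite (- l)))
    by (simpl; rewrite Ropp_involutive; reflexivity).
  rewrite <- H, <- Rbar_opp_glb_lub.
  apply Rbar_glb_rw. intros x. split; intros [eps [He E]]; exists eps; split; try exact He.
  - rewrite E, Hflip, Rbar_opp_involutive. reflexivity.
  - rewrite Hflip, <- E, Rbar_opp_involutive. reflexivity.
Qed.

Lemma box_ratio_tracks_profile al : level_tracks (box_ratio (Kalpha al)) (dim_profile al).
Proof.
  intros e He. pose proof ln5_pos.
  set (C := (ln 125 + 3 * ln 44) / ln 5).
  destruct (nat_large (C / e)) as [K HK]. exists (S K). intros k delta Hk Hlev.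
  destruct (box_ratio_near_profile al k delta ltac:(lia) Hlev) as [beta [Hb Hbeta]].
  exists beta. split; [exact Hb|]. eapply Rle_lt_trans; [exact Hbeta|].
  specialize (HK k ltac:(lia)). assert (HkR : 0 < INR k) by (apply lt_0_INR; lia).
  replace ((ln 125 + 3 * ln 44) / (INR k * ln 5)) with (C / INR k) by (unfold C; field; lra).
  apply (Rmult_lt_reg_r (INR k)); [lra|]. unfold Rdiv at 1. rewrite Rmult_assoc, Rinv_l by lra.
  apply (Rmult_lt_compat_l e) in HK; [|lra]. unfold Rdiv in HK.
  rewrite <- Rmult_assoc, (Rmult_comm e C), Rmult_assoc, Rinv_r, Rmult_1_r in HK by lra. lra.
Qed.

Lemma lower_box_dim_Kalpha al V : is_LimInf_seq (dim_profile al) (Finite V) ->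
  lower_box_dim (Kalpha al) = Finite V.
Proof. exact (lub_glb_of_level_tracks _ _ V (box_ratio_tracks_profile al)). Qed.

Lemma upper_box_dim_Kalpha al V : is_LimSup_seq (dim_profile al) (Finite V) ->
  upper_box_dim (Kalpha al) = Finite V.
Proof. exact (glb_lub_of_level_tracks _ _ V (box_ratio_tracks_profile al)). Qed.

Lemma is_LimSup_seq_bounded (u : nat -> R) m M : (forall n, m <= u n <= M) ->
  is_LimSup_seq u (Finite (real (LimSup_seq u))).
Proof.
  intros Hb. unfold LimSup_seq. destruct (ex_LimSup_seq u) as [[l| |] Hl]; simpl; [exact Hl| |].
  - destruct (Hl M 0%nat) as [n [_ Hn]]. specialize (Hb n). lra.
  - destruct (Hl m) as [N HN]. specialize (HN N (le_n _)). specialize (Hb N). lra.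
Qed.

Lemma is_LimInf_seq_bounded (u : nat -> R) m M : (forall n, m <= u n <= M) ->
  is_LimInf_seq u (Finite (real (LimInf_seq u))).
Proof.
  intros Hb. unfold LimInf_seq. destruct (ex_LimInf_seq u) as [[l| |] Hl]; simpl; [exact Hl| |].
  - destruct (Hl M) as [N HN]. specialize (HN N (le_n _)). specialize (Hb N). lra.
  - destruct (Hl m 0%nat) as [n [_ Hn]]. specialize (Hb n). lra.
Qed.

Lemma is_LimInf_seq_affine_of_LimSup (u : nat -> R) a c L : 0 < c ->
  is_LimSup_seq u (Finite L) -> is_LimInf_seq (fun n => a - c * u n) (Finite (a - c * L)).
Proof.
  intros Hc HL eps. assert (Hp : 0 < eps / c) by (apply Rdiv_lt_0_compat; [apply cond_pos|lra]).
  destruct (HL (mkposreal _ Hp)) as [Hfreq [N Hev]]. simpl in *.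
  assert (Hscale : c * (eps / c) = eps) by (field; lra).
  split.
  - intros K. destruct (Hfreq K) as [n [Hn Hu]]. exists n. split; [exact Hn|]. nra.
  - exists N. intros n Hn. specialize (Hev n Hn). nra.
Qed.

Lemma is_LimSup_seq_affine_of_LimInf (u : nat -> R) a c L : 0 < c ->
  is_LimInf_seq u (Finite L) -> is_LimSup_seq (fun n => a - c * u n) (Finite (a - c * L)).
Proof.
  intros Hc HL. apply is_LimInf_opp_LimSup_seq.
  apply (is_LimSup_opp_LimInf_seq u (Finite L)) in HL.
  apply (is_LimInf_seq_ext (fun n => - a - c * - u n)); [intros n; ring|].
  replace (Rbar_opp (Finite (a - c * L))) with (Finite (- a - c * - L)) by (simpl; f_equal; ring).
  apply is_LimInf_seq_affine_of_LimSup; assumption.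
Qed.

Lemma dim_profile_affine al k :
  dim_profile al k = log5 44 - (log5 44 - log5 13) * lambda_m al k.
Proof. unfold dim_profile. ring. Qed.

Lemma dim_profile_LimInf al L : is_LimSup_seq (lambda_m al) (Finite L) ->
  is_LimInf_seq (dim_profile al) (Finite (L * log5 13 + (1 - L) * log5 44)).
Proof.
  intros HL. pose proof log5_bounds.
  replace (L * log5 13 + (1 - L) * log5 44) with (log5 44 - (log5 44 - log5 13) * L) by ring.
  apply (is_LimInf_seq_ext (fun n => log5 44 - (log5 44 - log5 13) * lambda_m al n)).
  - intros n. symmetry. apply dim_profile_affine.
  - apply is_LimInf_seq_affine_of_LimSup; [lra|exact HL].
Qed.

Lemma dim_profile_LimSup al L : is_LimInf_seq (lambda_m al) (Finite L) ->
  is_LimSup_seq (dim_profile al) (Finite (L * log5 13 + (1 - L) * log5 44)).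
Proof.
  intros HL. pose proof log5_bounds.
  replace (L * log5 13 + (1 - L) * log5 44) with (log5 44 - (log5 44 - log5 13) * L) by ring.
  apply (is_LimSup_seq_ext (fun n => log5 44 - (log5 44 - log5 13) * lambda_m al n)).
  - intros n. symmetry. apply dim_profile_affine.
  - apply is_LimSup_seq_affine_of_LimInf; [lra|exact HL].
Qed.

(** * Hausdorff dimension *)

Lemma sum_f_R0_le_series (a : nat -> R) v n : (forall i, 0 <= a i) -> is_series a v ->
  sum_f_R0 a n <= v.
Proof.
  intros Ha Hs.
  assert (H : Rbar_le (sum_f_R0 a n) v); [|exact H].
  apply (is_lim_seq_le_loc (fun _ => sum_f_R0 a n) (sum_n a)); [|apply is_lim_seq_const|exact Hs].
  exists n. intros m Hm. rewrite sum_n_Reals.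
  induction Hm as [|m Hm IH]; [lra|]. simpl. specialize (Ha (S m)). lra.
Qed.

Lemma series_nonneg (a : nat -> R) v : (forall i, 0 <= a i) -> is_series a v -> 0 <= v.
Proof.
  intros Ha Hs. pose proof (sum_f_R0_le_series a v 0 Ha Hs). simpl in H. specialize (Ha 0%nat). lra.
Qed.

Lemma is_series_indicator (A : R) n : is_series (fun i => if Nat.ltb i n then A else 0) (INR n * A).
Proof.
  assert (H : is_lim_seq (sum_n (fun i => if Nat.ltb i n then A else 0)) (INR n * A)); [|exact H].
  apply (is_lim_seq_ext_loc (fun _ => INR n * A)); [|apply is_lim_seq_const].
  exists n. intros m Hm. rewrite sum_n_Reals.
  assert (Hs : forall m,
    sum_f_R0 (fun i => if Nat.ltb i n then A else 0) m = INR (Nat.min (S m) n) * A).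
  { induction m0 as [|m0 IH].
    - simpl. destruct n as [|n]; simpl; lra.
    - simpl sum_f_R0. rewrite IH. destruct (Nat.ltb_spec (S m0) n).
      + rewrite (Nat.min_l (S m0) n), (Nat.min_l (S (S m0)) n), (S_INR (S m0)) by lia. lra.
      + rewrite (Nat.min_r (S (S m0)) n), (Nat.min_r (S m0) n) by lia. lra. }
  rewrite Hs, Nat.min_r by lia. reflexivity.
Qed.

Lemma is_series_padded n A eta :
  is_series (fun i => (if Nat.ltb i n then A else 0) + eta * (/ 2) ^ i) (INR n * A + 2 * eta).
Proof.
  assert (Hg : is_series (fun i => eta * (/ 2) ^ i) (2 * eta)).
  { assert (E : / (1 - / 2) * eta = 2 * eta) by field. rewrite <- E.
    apply (is_series_ext (fun i => (/ 2) ^ i * eta)); [intros i; apply Rmult_comm|].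
    apply is_series_scal_r, is_series_geom. rewrite Rabs_pos_eq; lra. }
  exact (is_series_plus _ _ _ _ (is_series_indicator A n) Hg).
Qed.

Lemma ncubes_Rpower al k : ncubes al k = Rpower (5 ^ k) (dim_profile al k).
Proof.
  unfold Rpower. rewrite ln_pow by lra. rewrite <- ln_ncubes.
  rewrite exp_ln; [reflexivity|]. pose proof (ncubes_ge_1 al k). lra.
Qed.

Lemma ln_le_inv x y : 0 < x -> 0 < y -> ln x <= ln y -> x <= y.
Proof.
  intros Hx Hy H. destruct (Rle_or_lt x y) as [h|h]; [exact h|].
  pose proof (ln_increasing y x Hy h). lra.
Qed.

(* Take [k] among the levels where [dim_profile] is below [(V + s) / 2]. *)
Lemma ncubes_cover_sum_small al V s eps : is_LimInf_seq (dim_profile al) (Finite V) ->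
  V < s -> 0 < eps -> exists k, (1 <= k)%nat /\ ncubes al k * Rpower (2 / 5 ^ k) s <= eps.
Proof.
  intros HV Hs He. set (t := (s - V) / 2). assert (Ht : 0 < t) by (unfold t; lra).
  pose proof ln5_pos. assert (Hl2 : 0 < ln 2) by (rewrite <- ln_1; apply ln_increasing; lra).
  destruct (nat_large ((s * ln 2 - ln eps) / (t * ln 5))) as [K HK].
  destruct (proj1 (HV (mkposreal t Ht)) (S K)) as [k [Hk Hdp]]. simpl in Hdp.
  exists k. split; [lia|]. specialize (HK k ltac:(lia)).
  assert (HkR : 0 < INR k) by (apply lt_0_INR; lia).
  pose proof (pow5_pos k). pose proof (ncubes_ge_1 al k).
  assert (Hr : 0 < 2 / 5 ^ k) by (apply Rdiv_lt_0_compat; lra).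
  apply ln_le_inv; [apply Rmult_lt_0_compat; [lra|apply exp_pos]|exact He|].
  rewrite ln_mult, ln_ncubes, ln_Rpower by (try apply exp_pos; lra).
  unfold Rdiv.
  rewrite ln_mult, ln_Rinv, ln_pow by (try apply Rinv_0_lt_compat; try apply pow_lt; lra).
  assert (Hbound : s * ln 2 - ln eps <= t * ln 5 * INR k).
  { apply (Rmult_lt_compat_l (t * ln 5)) in HK; [|nra]. unfold Rdiv in HK.
    rewrite Rmult_comm, Rmult_assoc, Rinv_l, Rmult_1_r in HK by nra. lra. }
  assert (dim_profile al k * (INR k * ln 5) <= (s - t) * (INR k * ln 5))
    by (apply Rmult_le_compat_r; [nra|unfold t in *; lra]).
  nra.
Qed.

Lemma Rpower_pos x y : 0 < Rpower x y.
Proof. apply exp_pos. Qed.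

Lemma Rpower_Rpower_inv t s : 0 < t -> s <> 0 -> Rpower (Rpower t (/ s)) s = t.
Proof. intros Ht Hs. rewrite Rpower_mult, Rinv_l, Rpower_1 by assumption. reflexivity. Qed.

Lemma Rpower_inv_Rpower t s : 0 < t -> s <> 0 -> Rpower (Rpower t s) (/ s) = t.
Proof. intros Ht Hs. rewrite Rpower_mult, Rinv_r, Rpower_1 by assumption. reflexivity. Qed.

(* The level-[k] cubes, followed by empty sets: [hausdorff_delta] requires positive radii, so
   these get radii with geometrically decreasing [s]-th powers. *)
Lemma Kalpha_small_cover al V s delta eps : is_LimInf_seq (dim_profile al) (Finite V) ->
  0 < s -> V < s -> 0 < delta -> 0 < eps ->
  exists (U : nat -> pt -> Prop) (r : nat -> R) v,
    (forall i, 0 < r i <= delta) /\ (forall i, diam_le (U i) (r i)) /\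
    (forall p, Kalpha al p -> exists i, U i p) /\
    is_series (fun i => Rpower (r i) s) v /\ v <= eps.
Proof.
  intros HV Hs HVs Hd He.
  set (eps0 := Rmin eps (Rpower delta s)).
  assert (Heps0 : 0 < eps0) by (apply Rmin_glb_lt; [lra|apply Rpower_pos]).
  destruct (ncubes_cover_sum_small al V s (eps0 / 2) HV HVs ltac:(lra)) as [k [Hk Hsum]].
  set (n := nwords al 0 k). set (A := Rpower (2 / 5 ^ k) s). set (eta := eps0 / 4).
  fold n A in Hsum. unfold ncubes in Hsum. fold n in Hsum.
  assert (HA : 0 < A) by apply Rpower_pos.
  assert (HA2 : A <= eps0 / 2).
  { pose proof (nwords_pos al k 0) as Hn. apply (le_INR 1) in Hn. fold n in Hn.
    change (INR 1) with 1 in Hn. nra. }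
  set (tt := fun i => (if Nat.ltb i n then A else 0) + eta * (/ 2) ^ i).
  assert (Htt : forall i, 0 < tt i <= Rpower delta s).
  { intros i. unfold tt. assert (0 < (/ 2) ^ i <= 1).
    { split; [apply pow_lt; lra|]. rewrite <- (pow1 i). apply pow_incr. lra. }
    assert (eps0 <= Rpower delta s) by apply Rmin_r.
    destruct (Nat.ltb i n); unfold eta; split; nra. }
  exists (fun i => if Nat.ltb i n then cube (nth i (words al 0 k) []) else (fun _ => False)),
    (fun i => Rpower (tt i) (/ s)), (INR n * A + 2 * eta).
  split; [|split; [|split; [|split]]].
  - intros i. split; [apply Rpower_pos|].
    rewrite <- (Rpower_inv_Rpower delta s) by lra.
    apply Rle_Rpower_l; [left; apply Rinv_0_lt_compat; lra|apply Htt].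
  - intros i. destruct (Nat.ltb_spec i n) as [Hi|Hi]; [|intros P Q []].
    intros P Q HP HQ. eapply Rle_trans; [apply (nth_words_diam al k i Hi P Q HP HQ)|].
    rewrite <- (Rpower_inv_Rpower (2 / 5 ^ k) s)
      by (try apply Rdiv_lt_0_compat; try apply pow5_pos; lra).
    apply Rle_Rpower_l; [left; apply Rinv_0_lt_compat; lra|]. fold A.
    split; [exact HA|]. unfold tt.
    rewrite (proj2 (Nat.ltb_lt i n) Hi). pose proof (pow_lt (/ 2) i ltac:(lra)). unfold eta. nra.
  - intros p Hp. destruct (Kalpha_covered_by_words al k Hk p Hp) as [i [Hi Hq]].
    exists i. rewrite (proj2 (Nat.ltb_lt i n) Hi). exact Hq.
  - apply (is_series_ext tt); [|apply is_series_padded].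
    intros i. rewrite Rpower_Rpower_inv; [reflexivity|apply Htt|lra].
  - assert (eps0 <= eps) by apply Rmin_l. unfold eta. lra.
Qed.

Lemma hausdorff_delta_Kalpha_zero al V s delta : is_LimInf_seq (dim_profile al) (Finite V) ->
  0 < s -> V < s -> 0 < delta -> hausdorff_delta s delta (Kalpha al) = Finite 0.
Proof.
  intros HV Hs HVs Hd. unfold hausdorff_delta.
  match goal with |- Glb_Rbar ?E = _ =>
    destruct (Glb_Rbar_correct E) as [Hlb Hglb]; set (g := Glb_Rbar E) in * end.
  assert (H0 : Rbar_le 0 g).
  { apply Hglb. intros x [U [r [Hr [_ [_ Hser]]]]]. simpl.
    apply (series_nonneg (fun i => Rpower (r i) s) x); [|exact Hser].
    intros i. left. apply Rpower_pos. }
  assert (Heps : forall eps, 0 < eps -> Rbar_le g (Finite (0 + eps))).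
  { intros eps He. rewrite Rplus_0_l.
    destruct (Kalpha_small_cover al V s delta eps HV Hs HVs Hd He)
      as [U [r [v [Hr [HU [Hc [Hser Hv]]]]]]].
    apply Rbar_le_trans with (Finite v); [apply Hlb; exists U, r; auto|exact Hv]. }
  apply Rbar_le_of_eps in Heps.
  destruct g as [g| |]; simpl in H0, Heps; try contradiction. f_equal. lra.
Qed.

Lemma hausdorff_measure_Kalpha_zero al V s : is_LimInf_seq (dim_profile al) (Finite V) ->
  0 < s -> V < s -> hausdorff_measure s (Kalpha al) = Finite 0.
Proof.
  intros HV Hs HVs. unfold hausdorff_measure. apply Rbar_is_lub_unique. split.
  - intros x [delta [Hd ->]]. rewrite (hausdorff_delta_Kalpha_zero al V s delta); auto. simpl; lra.
  - intros b Hb. apply Hb. exists 1. split; [lra|].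
    rewrite (hausdorff_delta_Kalpha_zero al V s 1); auto. lra.
Qed.

Lemma list_bound_monotone {A} (l : list A) (Q : A -> nat -> Prop) :
  (forall d M M', (M <= M')%nat -> Q d M -> Q d M') ->
  (forall d, In d l -> exists M, Q d M) -> exists M, forall d, In d l -> Q d M.
Proof.
  intros Hm. induction l as [|x l IH]; intros H.
  - exists O. intros d [].
  - destruct IH as [M1 HM1]; [intros d Hd; apply H; simpl; auto|].
    destruct (H x (or_introl eq_refl)) as [M2 HM2]. exists (M1 + M2)%nat.
    intros d [<-|Hd]; [apply (Hm _ M2)|apply (Hm _ M1)]; auto; lia.
Qed.

Definition update {A} (e : nat -> A) (L : nat) (d : A) : nat -> A :=
  fun j => if Nat.eqb j L then d else e j.

Section FiniteSubcover.

Variables (A : Type) (a0 : A) (branch : nat -> list A).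
Variables (caught : nat -> (nat -> A) -> Prop) (depth : nat -> nat).
Hypothesis caught_local : forall i e e', (forall j, (j < depth i)%nat -> e j = e' j) ->
  caught i e -> caught i e'.

Let branch_path (e : nat -> A) : Prop := forall j, In (e j) (branch j).

(* Koenig's invariant: the first [L] digits of [e] extend to paths avoiding any finite
   subfamily of [caught]. *)
Let escapes (e : nat -> A) (L : nat) : Prop :=
  forall M, exists e', branch_path e' /\ (forall j, (j < L)%nat -> e' j = e j) /\
    forall i, (i <= M)%nat -> ~ caught i e'.

Lemma escapes_step e L : escapes e L -> exists d, escapes (update e L d) (S L).
Proof.
  intros Hg. apply NNPP. intros Hn.
  set (Q := fun d M => forall e', branch_path e' ->
    (forall j, (j < S L)%nat -> e' j = update e L d j) -> exists i, (i <= M)%nat /\ caught i e').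
  destruct (list_bound_monotone (branch L) Q) as [M HM].
  - intros d M M' HMM HQ e' He' Hag. destruct (HQ e' He' Hag) as [i [Hi Hc]].
    exists i. split; [lia|exact Hc].
  - intros d _. apply NNPP. intros H1. apply Hn. exists d. intros M. apply NNPP. intros H2.
    apply H1. exists M. intros e' He' Hag. apply NNPP. intros H3. apply H2.
    exists e'. split; [exact He'|]. split; [exact Hag|]. intros i Hi Hc. apply H3. eauto.
  - destruct (Hg M) as [e' [He' [Hag Hnc]]].
    destruct (HM (e' L) (He' L) e' He') as [i [Hi Hc]]; [|exact (Hnc i Hi Hc)].
    intros j Hj. unfold update. destruct (Nat.eqb_spec j L); [subst; reflexivity|apply Hag; lia].
Qed.

Let choose (e : nat -> A) (L : nat) : A :=
  epsilon (inhabits a0) (fun d => escapes (update e L d) (S L)).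

Fixpoint refine (e0 : nat -> A) (n : nat) : nat -> A :=
  match n with
  | O => e0
  | S n' => update (refine e0 n') n' (choose (refine e0 n') n')
  end.

Lemma refine_stable e0 n m j : (j < n)%nat -> (n <= m)%nat -> refine e0 m j = refine e0 n j.
Proof.
  intros Hj Hnm. induction Hnm as [|m Hnm IH]; [reflexivity|].
  simpl. unfold update. destruct (Nat.eqb_spec j m); [lia|exact IH].
Qed.

Lemma finite_subcover : (forall e, branch_path e -> exists i, caught i e) ->
  exists M, forall e, branch_path e -> exists i, (i <= M)%nat /\ caught i e.
Proof.
  intros Hcov. apply NNPP. intros Hno.
  set (e0 := fun _ : nat => a0).
  assert (Hgood : forall n, escapes (refine e0 n) n).
  { induction n as [|n IH].
    - intros M. apply NNPP. intros H. apply Hno. exists M. intros e He. apply NNPP. intros H'.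
      apply H. exists e. split; [exact He|]. split; [intros; lia|]. intros i Hi Hc. eauto.
    - exact (epsilon_spec (inhabits a0) _ (escapes_step _ _ IH)). }
  set (e := fun j => refine e0 (S j) j).
  assert (He : branch_path e).
  { intros j. destruct (Hgood (S j) O) as [e' [He' [Hag _]]]. unfold e.
    rewrite <- (Hag j ltac:(lia)). apply He'. }
  destruct (Hcov e He) as [i Hc].
  destruct (Hgood (depth i) i) as [e' [_ [Hag Hnc]]].
  apply (Hnc i (le_n i)). apply (caught_local i e e'); [|exact Hc].
  intros j Hj. rewrite Hag by exact Hj. unfold e. symmetry. apply refine_stable; lia.
Qed.

End FiniteSubcover.

Lemma nwords_le_sum_of_cover al (U : nat -> pt -> Prop) (lev : nat -> nat) M L :
  (forall i, (i <= M)%nat -> diam_le (U i) (/ 5 ^ lev i) /\ (lev i <= L)%nat) ->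
  (forall e, path al e -> exists i, (i <= M)%nat /\ exists q, U i q /\ cube (prefix e (lev i)) q) ->
  (nwords al 0 L <=
     list_sum (map (fun i => 125 * nwords al (lev i) (L - lev i)) (seq 0 (S M))))%nat.
Proof.
  intros HU Hcov. rewrite <- length_words.
  apply (NoDup_covered_length _ (S M) _ (fun i s => exists q, U i q /\ cube (firstn (lev i) s) q)).
  - apply NoDup_words.
  - intros s Hs. pose proof Hs as [Hv Hl]%In_words.
    destruct (Hcov (extend al s) (extend_path al s Hv)) as [i [Hi [q [Uq Hq]]]].
    exists i. split; [lia|]. exists q. split; [exact Uq|].
    rewrite prefix_extend in Hq; [exact Hq|]. rewrite Hl. apply HU, Hi.
  - intros i Hi. destruct (HU i ltac:(lia)) as [HUi HiL].
    destruct (cubes_meeting_small_set al 0 (lev i) (U i) HUi) as [P [HP1 HP2]].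
    exists (flat_map (fun p => map (fun t => p ++ t) (words al (lev i) (L - lev i))) P). split.
    + rewrite (flat_map_constant_length (c := nwords al (lev i) (L - lev i))); [nia|].
      intros p _. rewrite length_map, length_words. reflexivity.
    + intros s Hs [q [Uq Hq]]. apply In_words in Hs. destruct Hs as [Hv Hl].
      rewrite <- (firstn_skipn (lev i) s) in Hv. apply admissible_app in Hv.
      destruct Hv as [Hv1 Hv2].
      assert (Hl1 : length (firstn (lev i) s) = lev i) by (rewrite length_firstn; lia).
      rewrite Hl1 in Hv2. apply in_flat_map. exists (firstn (lev i) s). split.
      * apply HP2; [apply In_words; split; assumption|exists q; split; assumption].
      * apply in_map_iff. exists (skipn (lev i) s). split; [apply firstn_skipn|].
        apply In_words. split; [exact Hv2|rewrite length_skipn; lia].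
Qed.

Lemma INR_list_sum_le_series (c : nat -> nat) (w : nat -> R) K v M : 0 <= K ->
  (forall i, 0 <= w i) -> is_series w v -> (forall i, (i <= M)%nat -> INR (c i) <= K * w i) ->
  INR (list_sum (map c (seq 0 (S M)))) <= K * v.
Proof.
  intros HK Hw Hs Hc.
  apply Rle_trans with (K * sum_f_R0 w M);
    [|apply Rmult_le_compat_l; [exact HK|apply sum_f_R0_le_series; assumption]].
  induction M as [|M IH].
  - simpl. rewrite Nat.add_0_r. apply Hc. lia.
  - rewrite seq_S, map_app, list_sum_app, plus_INR. simpl sum_f_R0. rewrite Rmult_plus_distr_l.
    apply Rplus_le_compat; [apply IH; intros i Hi; apply Hc; lia|].
    simpl. rewrite Nat.add_0_r. apply Hc. lia.
Qed.

Lemma Rpower_ge_1 x s : 1 <= x -> 0 <= s -> 1 <= Rpower x s.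
Proof. intros Hx Hs. rewrite <- (Rpower_O x) by lra. apply Rle_Rpower; assumption. Qed.

Lemma ncubes_ge_Rpower al V s : is_LimInf_seq (dim_profile al) (Finite V) -> 0 <= s < V ->
  exists c, 0 < c /\ forall k, c * Rpower (5 ^ k) s <= ncubes al k.
Proof.
  intros HV [Hs0 Hs]. destruct (proj2 (HV (mkposreal (V - s) ltac:(lra)))) as [K HK]. simpl in HK.
  assert (HRK : 1 <= Rpower (5 ^ K) s) by (apply Rpower_ge_1; [apply pow_R1_Rle|]; lra).
  exists (/ Rpower (5 ^ K) s). split; [apply Rinv_0_lt_compat, Rpower_pos|].
  intros k. pose proof (ncubes_ge_1 al k). pose proof (Rpower_pos (5 ^ k) s).
  assert (Hc1 : / Rpower (5 ^ K) s <= 1) by (rewrite <- Rinv_1; apply Rinv_le_contravar; lra).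
  destruct (Nat.le_gt_cases K k) as [Hk|Hk].
  - rewrite ncubes_Rpower. apply Rle_trans with (Rpower (5 ^ k) s); [nra|].
    apply Rle_Rpower; [apply pow_R1_Rle; lra|]. specialize (HK k Hk). lra.
  - apply Rle_trans with 1; [|lra].
    apply (Rmult_le_reg_l (Rpower (5 ^ K) s)); [lra|].
    rewrite <- Rmult_assoc, Rinv_r, Rmult_1_l, Rmult_1_r by lra.
    apply Rle_Rpower_l; [exact Hs0|]. split; [apply pow5_pos|apply Rle_pow; [lra|lia]].
Qed.

(* [N_L = N_k * nwords k (L - k)], and [N_k] is at least [c (5 ^ k) ^ s >= c 5 ^ - s r ^ - s]. *)
Lemma nwords_tail_le al c s k L r : 0 < c -> 0 <= s ->
  (forall k, c * Rpower (5 ^ k) s <= ncubes al k) -> (k <= L)%nat -> in_level k r ->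
  INR (125 * nwords al k (L - k)) <= 125 * Rpower 5 s / c * ncubes al L * Rpower r s.
Proof.
  intros Hc Hs HcN HkL [Hr _].
  set (X := INR (nwords al k (L - k))). assert (HX : 0 <= X) by apply pos_INR.
  assert (HXY : ncubes al L = ncubes al k * X).
  { unfold ncubes, X. rewrite <- mult_INR, <- nwords_add. f_equal. f_equal. lia. }
  pose proof (pow5_pos (S k)).
  assert (Hr0 : 0 < r) by (eapply Rlt_trans; [apply Rinv_0_lt_compat|]; eauto).
  assert (Hprod : 1 <= Rpower (5 ^ k) s * Rpower 5 s * Rpower r s).
  { rewrite !Rpower_mult_distr by (try apply Rmult_lt_0_compat; try apply pow5_pos; lra).
    apply Rpower_ge_1; [|exact Hs]. replace (5 ^ k * 5 * r) with (5 ^ S k * r) by (simpl; ring).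
    apply (Rmult_lt_compat_l (5 ^ S k)) in Hr; [|lra]. rewrite Rinv_r in Hr by lra. lra. }
  specialize (HcN k). pose proof (Rpower_pos 5 s). pose proof (Rpower_pos r s).
  rewrite mult_INR, HXY. fold X. replace (INR 125) with 125 by (simpl; lra).
  apply (Rmult_le_reg_r c); [exact Hc|].
  replace (125 * Rpower 5 s / c * (ncubes al k * X) * Rpower r s * c)
    with (125 * X * (ncubes al k * Rpower 5 s * Rpower r s)) by (field; lra).
  apply Rmult_le_compat_l; [lra|].
  apply Rle_trans with (c * (Rpower (5 ^ k) s * Rpower 5 s * Rpower r s)).
  - rewrite <- (Rmult_1_r c) at 1. apply Rmult_le_compat_l; lra.
  - rewrite <- !Rmult_assoc. apply Rmult_le_compat_r; [lra|]. apply Rmult_le_compat_r; lra.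
Qed.

Lemma upper_bound_on_prefix (f : nat -> nat) M : exists L, forall i, (i <= M)%nat -> (f i <= L)%nat.
Proof.
  induction M as [|M [L HL]]; [exists (f 0%nat); intros i Hi; replace i with 0%nat by lia; lia|].
  exists (Nat.max L (f (S M))). intros i Hi.
  destruct (Nat.eq_dec i (S M)) as [->|Hne]; [lia|]. specialize (HL i ltac:(lia)). lia.
Qed.

(* Mass distribution in combinatorial form: by compactness a cover can be taken finite, and
   counting level-[L] words through it bounds [sum r_i ^ s] below. *)
Lemma Kalpha_cover_sum_lower al V s : is_LimInf_seq (dim_profile al) (Finite V) -> 0 <= s < V ->
  exists c0, 0 < c0 /\ forall (U : nat -> pt -> Prop) (r : nat -> R) v,
    (forall i, 0 < r i <= 1) -> (forall i, diam_le (U i) (r i)) ->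
    (forall p, Kalpha al p -> exists i, U i p) ->
    is_series (fun i => Rpower (r i) s) v -> c0 <= v.
Proof.
  intros HV Hs. destruct (ncubes_ge_Rpower al V s HV Hs) as [c [Hc HcN]].
  pose proof (Rpower_pos 5 s) as H5s.
  exists (c / (125 * Rpower 5 s)). split; [apply Rdiv_lt_0_compat; lra|].
  intros U r v Hr HU Hcov Hser.
  destruct (choice (fun i k => in_level k (r i))) as [lev Hlev].
  { intros i. apply in_level_exists, Hr. }
  destruct (finite_subcover digit (0, 0, 0)%nat (fun j => digits (al j))
    (fun i e => exists q, U i q /\ cube (prefix e (lev i)) q) lev) as [M HM].
  - intros i e e' Hag [q [Uq Hq]]. exists q. split; [exact Uq|].
    replace (prefix e' (lev i)) with (prefix e (lev i)); [exact Hq|].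
    apply map_ext_in. intros j Hj. apply in_seq in Hj. apply Hag. lia.
  - intros e He. destruct (Hcov (point e) (Kalpha_point al e He)) as [i Hi].
    exists i, (point e). split; [exact Hi|exact (cube_prefix_point al e _ He)].
  - destruct (upper_bound_on_prefix lev M) as [L HL].
    pose proof (ncubes_ge_1 al L).
    set (K := 125 * Rpower 5 s / c).
    assert (HK : 0 < K) by (apply Rdiv_lt_0_compat; lra).
    assert (Hcount : ncubes al L <= K * ncubes al L * v).
    { eapply Rle_trans; [apply le_INR, (nwords_le_sum_of_cover al U lev M L)|].
      - intros i Hi. split; [|apply HL, Hi].
        intros P Q HP HQ. eapply Rle_trans; [apply (HU i P Q HP HQ)|apply Hlev].
      - exact HM.
      - apply (INR_list_sum_le_series _ (fun i => Rpower (r i) s));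
          [nra|intros i; left; apply Rpower_pos|exact Hser|].
        intros i Hi.
        apply (nwords_tail_le al c s); [lra|apply Hs|exact HcN|apply HL, Hi|apply Hlev]. }
    assert (Hv : 1 <= K * v) by nra.
    apply (Rmult_le_reg_l K); [exact HK|]. unfold K at 1.
    replace (125 * Rpower 5 s / c * (c / (125 * Rpower 5 s))) with 1 by (field; lra). lra.
Qed.

Lemma hausdorff_measure_Kalpha_pos al V s : is_LimInf_seq (dim_profile al) (Finite V) ->
  0 <= s < V -> hausdorff_measure s (Kalpha al) <> Finite 0.
Proof.
  intros HV Hs Heq. destruct (Kalpha_cover_sum_lower al V s HV Hs) as [c [Hc Hcv]].
  assert (Hd : Rbar_le c (hausdorff_delta s 1 (Kalpha al))).
  { unfold hausdorff_delta.
    match goal with |- Rbar_le _ (Glb_Rbar ?E) => destruct (Glb_Rbar_correct E) as [_ Hglb] end.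
    apply Hglb. intros x [U [r [Hr [HU [Hcov Hser]]]]]. apply (Hcv U r x); auto. }
  assert (Hm : Rbar_le (hausdorff_delta s 1 (Kalpha al)) (hausdorff_measure s (Kalpha al))).
  { apply Rbar_lub_spec. exists 1. split; [lra|reflexivity]. }
  rewrite Heq in Hm. pose proof (Rbar_le_trans _ _ _ Hd Hm). simpl in *. lra.
Qed.

Lemma hausdorff_dim_Kalpha al V : is_LimInf_seq (dim_profile al) (Finite V) ->
  hausdorff_dim (Kalpha al) = Finite V.
Proof.
  intros HV.
  assert (HV0 : 0 < V).
  { destruct (proj1 (HV (mkposreal (/ 2) ltac:(lra))) O) as [k [_ Hk]]. simpl in Hk.
    pose proof (dim_profile_bounds al k). pose proof log5_bounds. lra. }
  unfold hausdorff_dim.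
  match goal with |- Glb_Rbar ?E = _ =>
    destruct (Glb_Rbar_correct E) as [Hlb Hglb]; set (g := Glb_Rbar E) in * end.
  assert (Hge : Rbar_le (Finite V) g).
  { apply Hglb. intros s [Hs0 Hs]. simpl. destruct (Rle_or_lt V s) as [h|h]; [exact h|].
    exfalso. exact (hausdorff_measure_Kalpha_pos al V s HV (conj Hs0 h) Hs). }
  assert (Hle : Rbar_le g (Finite V)).
  { apply Rbar_le_of_eps. intros e He. apply Hlb. split; [lra|].
    apply (hausdorff_measure_Kalpha_zero al V); [exact HV|lra|lra]. }
  destruct g as [g| |]; simpl in Hge, Hle; try contradiction. f_equal. lra.
Qed.

(** * Preperiodic sequences *)

Lemma nzeros_add al a b : (nzeros al a <= nzeros al (a + b) <= nzeros al a + b)%nat.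
Proof.
  induction b as [|b IH]; [rewrite Nat.add_0_r; lia|].
  rewrite Nat.add_succ_r. simpl. destruct (al (a + b)%nat); lia.
Qed.

Section Preperiodic.

Variables (al : nat -> bool) (n0 per : nat).
Hypothesis per_pos : (0 < per)%nat.
Hypothesis al_periodic : forall n, (n0 <= n)%nat -> al (n + per)%nat = al n.

Let Z : nat := (nzeros al (n0 + per) - nzeros al n0)%nat.
Let rho : R := INR Z / INR per.

Lemma nzeros_shift m : (n0 <= m)%nat -> nzeros al (m + per) = (nzeros al m + Z)%nat.
Proof.
  intros Hm. pose proof (nzeros_add al n0 per). unfold Z.
  induction Hm as [|m Hm IH]; [lia|].
  replace (S m + per)%nat with (S (m + per)) by lia. simpl nzeros.
  rewrite IH, al_periodic by exact Hm. destruct (al m); lia.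
Qed.

(* Removing a period does not change [nzeros m - m rho]; it is bounded on the first
   [n0 + per] indices. *)
Lemma nzeros_linear_error m : Rabs (INR (nzeros al m) - INR m * rho) <= 2 * INR (n0 + per).
Proof.
  assert (HperR : 0 < INR per) by (apply lt_0_INR; lia).
  assert (Hrho : 0 <= rho <= 1).
  { pose proof (nzeros_add al n0 per). unfold rho, Z.
    split; [apply Rdiv_le_0_compat; [apply pos_INR|lra]|].
    apply (Rmult_le_reg_r (INR per)); [lra|]. unfold Rdiv. rewrite Rmult_assoc, Rinv_l by lra.
    rewrite Rmult_1_r, Rmult_1_l. apply le_INR. lia. }
  induction m as [m IH] using Wf_nat.lt_wf_ind.
  destruct (Nat.lt_ge_cases m (n0 + per)) as [h|h].
  - pose proof (nzeros_le al m) as Hz. apply le_INR in Hz. pose proof (pos_INR (nzeros al m)).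
    apply lt_INR in h. pose proof (pos_INR m). apply Rabs_le. split; nra.
  - replace m with ((m - per) + per)%nat at 1 2 by lia.
    rewrite nzeros_shift by lia.
    rewrite (plus_INR (nzeros al (m - per)) Z), (plus_INR (m - per) per).
    replace (INR (nzeros al (m - per)) + INR Z - (INR (m - per) + INR per) * rho)
      with (INR (nzeros al (m - per)) - INR (m - per) * rho) by (unfold rho; field; lra).
    apply IH. lia.
Qed.

Lemma lambda_m_converges : is_lim_seq (lambda_m al) rho.
Proof.
  apply is_lim_seq_spec. intros eps. set (B := 2 * INR (n0 + per)).
  destruct (nat_large (B / eps)) as [K HK]. exists (S K). intros n Hn.
  specialize (HK n ltac:(lia)). assert (HnR : 0 < INR n) by (apply lt_0_INR; lia).
  pose proof (cond_pos eps).
  unfold lambda_m.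
  replace (INR (nzeros al n) / INR n - rho) with ((INR (nzeros al n) - INR n * rho) / INR n)
    by (field; lra).
  unfold Rdiv at 1. rewrite Rabs_mult, Rabs_inv, (Rabs_pos_eq (INR n)) by lra.
  apply (Rmult_lt_reg_r (INR n)); [lra|]. rewrite Rmult_assoc, Rinv_l, Rmult_1_r by lra.
  apply (Rmult_lt_compat_l eps) in HK; [|lra]. unfold Rdiv in HK.
  rewrite <- Rmult_assoc, (Rmult_comm eps B), Rmult_assoc, Rinv_r, Rmult_1_r in HK by lra.
  pose proof (nzeros_linear_error n). fold B in H0. lra.
Qed.

End Preperiodic.

Lemma preperiodic_lambda_converges al : preperiodic al ->
  exists rho : R, is_lim_seq (lambda_m al) rho.
Proof.
  intros [n0 [per [Hper Hp]]]. eexists. exact (lambda_m_converges al n0 per Hper Hp).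
Qed.

Theorem theorem4 (alpha : nat -> bool) :
  lower_box_dim (Kalpha alpha) =
    Finite (real (lambda_sup alpha) * log5 13 + (1 - real (lambda_sup alpha)) * log5 44) /\
  upper_box_dim (Kalpha alpha) =
    Finite (real (lambda_inf alpha) * log5 13 + (1 - real (lambda_inf alpha)) * log5 44) /\
  (preperiodic alpha ->
     let v := real (lambda_lim alpha) * log5 13 + (1 - real (lambda_lim alpha)) * log5 44 in
     hausdorff_dim (Kalpha alpha) = Finite v /\
     lower_box_dim (Kalpha alpha) = Finite v /\
     upper_box_dim (Kalpha alpha) = Finite v).
Proof.
  pose proof (lambda_m_bounds alpha) as Hb.
  pose proof (dim_profile_LimInf alpha _ (is_LimSup_seq_bounded _ 0 1 Hb)) as Hinf.
  pose proof (dim_profile_LimSup alpha _ (is_LimInf_seq_bounded _ 0 1 Hb)) as Hsup.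
  split; [exact (lower_box_dim_Kalpha alpha _ Hinf)|].
  split; [exact (upper_box_dim_Kalpha alpha _ Hsup)|].
  intros Hper. destruct (preperiodic_lambda_converges alpha Hper) as [rho Hrho].
  unfold lambda_sup, lambda_inf, lambda_lim in *.
  rewrite (is_LimSup_seq_unique _ _ (is_lim_LimSup_seq _ _ Hrho)) in Hinf.
  rewrite (is_LimInf_seq_unique _ _ (is_lim_LimInf_seq _ _ Hrho)) in Hsup.
  rewrite (is_lim_seq_unique _ _ Hrho). simpl in Hinf, Hsup |- *.
  split; [|split].
  - exact (hausdorff_dim_Kalpha alpha _ Hinf).
  - exact (lower_box_dim_Kalpha alpha _ Hinf).
  - exact (upper_box_dim_Kalpha alpha _ Hsup).
Qed.
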